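(* Assume $d'=1$ and $t\ge2$, and let $n,j\in[t]$ with $n\neq j$. For each $k_3\in[d]$ define the slice $M^{(k_3)}_{n,j}=\big(\tilde T_{(k_1,n),(k_2,n),(k_3,j)}\big)_{k_1,k_2\in[d]}$ where $\tilde T_{(k_1,n),(k_2,n),(k_3,j)}=y_{n,j}(\{k_1,k_2\},k_3)$. Then: (1) on the image of $\mu$, for fixed $j$ and $k_3$, $M^{(k_3)}_{n,j}=M^{(k_3)}_{n',j}$ for all $n,n'\ne j$; (2) on the image of $\mu$, every matrix $M(\lambda)=\sum_{k=1}^d\lambda_kM^{(k)}_{n,j}$, $\lambda\in\mathbb R^d$, has rank at most $2$; (3) for any row set $R=\{r_1,r_2,r_3\}\subseteq[d]$, column set $C=\{c_1,c_2,c_3\}\subseteq[d]$ and multiset $S\in\operatorname{Mult}_3([d])$, the cubic polynomial \[ \Delta^S_{R,C}=\sum_{(t_1,t_2,t_3)\in\operatorname{Perm}(S)}\det\big(\tilde T_{(r_p,n),(c_q,n),(t_p,j)}\big)_{p,q=1}^3 \] vanishes on the attention variety. (These are the coefficients of $\lambda_{s_1}\lambda_{s_2}\lambda_{s_3}$ in the $(R,C)$ $3\times3$ minor of $M(\lambda)$, indexed by $\binom d3^2\binom{d+2}3$ triples $(R,C,S)$.)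
   Context: Setup: $Q,K\in\mathbb R^{a\times d}$, $V\in\mathbb R^{1\times d}$, $A=K^\top Q$, $\varphi_W(X)=VX(X^\top AX)$ for $X=(x_{kn})\in\mathbb R^{d\times t}$. For $\mathcal A$ a size-2 multiset on $[d]$, $b\in[d]$, $n\ne j$: $c_{n,j}(\mathcal A,b)$ is the coefficient of $(\prod_{u\in\mathcal A}x_{un})x_{bj}$ in $\varphi_W(X)[1,j]$, and $y_{n,j}(\mathcal A,b)=c_{n,j}(\mathcal A,b)/|\operatorname{Perm}(\mathcal A)|$ with $\operatorname{Perm}$ the set of distinct orderings of a multiset. $\mu$ maps $W=(Q,K,V)$ to the array of all scaled coefficients (ambient coordinates carry the same names); the attention variety is the Zariski closure of $\operatorname{im}\mu$. $\operatorname{Mult}_3([d])$ is the set of size-3 multisets on $[d]$. *)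

From HB Require Import structures.
From mathcomp Require Import all_boot all_order all_algebra.
From mathcomp Require Import mpoly.
Set Implicit Arguments.
Unset Strict Implicit.
Unset Printing Implicit Defensive.
Import Order.TTheory GRing.Theory Num.Theory.
Local Open Scope ring_scope.

(* Multisets of size k on [d] = 'I_d, represented canonically as     *)
(* nondecreasing k-tuples.                                          *)
Definition is_mset (k d : nat) (s : k.-tuple 'I_d) : bool :=
  sorted (fun x y : 'I_d => (x <= y)%N) s.

Record mset (k d : nat) := MSet { mtup :> k.-tuple 'I_d; _ : is_mset mtup }.

HB.instance Definition _ k d := [isSub for @mtup k d].
HB.instance Definition _ k d := [Finite of mset k d by <:].

Notation Mult k d := (mset k d).

Lemma msort_size (k d : nat) (s : k.-tuple 'I_d) :
  size (sort (fun x y : 'I_d => (x <= y)%N) s) == k.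
Proof. by rewrite size_sort size_tuple. Qed.

Lemma msort_sorted (k d : nat) (s : k.-tuple 'I_d) :
  is_mset (Tuple (msort_size s)).
Proof.
rewrite /is_mset /=; apply: sort_sorted => x y; exact: leq_total.
Qed.

Definition msort (k d : nat) (s : k.-tuple 'I_d) : mset k d :=
  MSet (msort_sorted s).

Definition mset2 (d : nat) (k1 k2 : 'I_d) : mset 2 d := msort [tuple k1; k2].

Definition Perm (k d : nat) (S : mset k d) : {set k.-tuple 'I_d} :=
  [set s : k.-tuple 'I_d | perm_eq s (mtup S)].

(* Formal input X = (x_{k m}) in R^{d x t}: polynomial ring in d*t   *)
(* variables, variable x_{k m} has index mxvec_index k m.            *)
Section Attention.
Variables (R : realFieldType) (d t a : nat).

Definition Xvar (k : 'I_d) (m : 'I_t) : 'I_(d * t) := mxvec_index k m.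

Definition Xmx : 'M[{mpoly R[d * t]}]_(d, t) :=
  \matrix_(k, m) mpolyX R (mnm1 (Xvar k m)).

Definition Amat (Q K : 'M[R]_(a, d)) : 'M[R]_d := K^T *m Q.

Definition phiW (Q K : 'M[R]_(a, d)) (V : 'rV[R]_d) : 'rV[{mpoly R[d * t]}]_t :=
  map_mx (fun r => r%:MP) V *m Xmx
    *m (Xmx^T *m map_mx (fun r => r%:MP) (Amat Q K) *m Xmx).

Definition monoAb (A : mset 2 d) (b : 'I_d) (n j : 'I_t) : 'X_{1..d * t} :=
  mnm_add (foldr (fun u m => mnm_add (mnm1 (Xvar u n)) m) (@mnm0 _) (mtup A))
          (mnm1 (Xvar b j)).

Definition coef_c (Q K : 'M[R]_(a, d)) (V : 'rV[R]_d) (n j : 'I_t)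
    (A : mset 2 d) (b : 'I_d) : R :=
  mcoeff (monoAb A b n j) (phiW Q K V 0 j).

Definition coef_y (Q K : 'M[R]_(a, d)) (V : 'rV[R]_d) (n j : 'I_t)
    (A : mset 2 d) (b : 'I_d) : R :=
  coef_c Q K V n j A b / (#|Perm A|)%:R.

Definition Idx := {x : 'I_t * 'I_t * mset 2 d * 'I_d | x.1.1.1 != x.1.1.2}.

Definition mkIdx (n j : 'I_t) (hnj : n != j) (A : mset 2 d) (b : 'I_d) : Idx :=
  @exist _ (fun x : 'I_t * 'I_t * mset 2 d * 'I_d => x.1.1.1 != x.1.1.2)
    (n, j, A, b) hnj.

Definition mu (Q K : 'M[R]_(a, d)) (V : 'rV[R]_d) : Idx -> R :=
  fun i => let: (n, j, A, b) := sval i in coef_y Q K V n j A b.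

Definition ambient_eval (p : {mpoly R[#|{: Idx}|]}) (z : Idx -> R) : R :=
  p.@[fun i => z (enum_val i)].

Definition attention_variety (z : Idx -> R) : Prop :=
  forall p : {mpoly R[#|{: Idx}|]},
    (forall (Q K : 'M[R]_(a, d)) (V : 'rV[R]_d), ambient_eval p (mu Q K V) = 0) ->
    ambient_eval p z = 0.

Definition Ttil (z : Idx -> R) (n j : 'I_t) (hnj : n != j) (k1 k2 k3 : 'I_d) : R :=
  z (mkIdx hnj (mset2 k1 k2) k3).

Definition Mslice (z : Idx -> R) (n j : 'I_t) (hnj : n != j) (k3 : 'I_d) : 'M[R]_d :=
  \matrix_(k1, k2) Ttil z hnj k1 k2 k3.

Definition Delta (z : Idx -> R) (n j : 'I_t) (hnj : n != j)
    (r c : 3.-tuple 'I_d) (S : mset 3 d) : R :=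
  \sum_(s in Perm S)
     \det (\matrix_(p < 3, q < 3) Ttil z hnj (tnth r p) (tnth c q) (tnth s p)).
End Attention.

(* On the image of mu the scaled coefficient y_{n,j}({u,v},b) equals
   (V_u A_{vb} + V_v A_{ub}) / 2, independently of n.  Hence every slice
   M^{(k)} is the symmetric matrix (V^T a_k^T + a_k V) / 2, a_k the k-th column
   of A = K^T Q; a combination sum_k lambda_k M^{(k)} has the same form with a_k
   replaced by sum_k lambda_k a_k, so its rank is at most 2.  Consequently the
   3 x 3 minors of the pencil sum_k X_k M^{(k)} are identically zero as
   polynomials in the X_k; Delta^S_{R,C} is the coefficient of X^S in such a
   minor, so it vanishes on the image of mu, and being a polynomial in the
   ambient coordinates it vanishes on the Zariski closure. *)
From mathcomp Require Import all_boot all_order all_algebra.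
From mathcomp Require Import mpoly ring.
Import Order.TTheory GRing.Theory Num.Theory.
Local Open Scope ring_scope.
Set Implicit Arguments.
Unset Strict Implicit.
Unset Printing Implicit Defensive.

Definition mnm_of_seq N (s : seq 'I_N) : 'X_{1..N} :=
  \big[mnm_add/mnm0]_(i <- s) U_(i)%MM.

Lemma mnm_of_seqE N (s : seq 'I_N) i : mnm_of_seq s i = count_mem i s.
Proof.
rewrite /mnm_of_seq mnm_sumE; elim: s => [|x s IHs]; first by rewrite big_nil.
by rewrite big_cons IHs mnm1E /= eq_sym.
Qed.

Lemma eq_mnm_of_seq N (s1 s2 : seq 'I_N) :
  (mnm_of_seq s1 == mnm_of_seq s2) = perm_eq s1 s2.
Proof.
apply/eqP/idP => [eq_s12|perm_s12]; last exact: perm_big.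
by apply/allP => i _; rewrite /= -!mnm_of_seqE eq_s12.
Qed.

Lemma mpolyX_of_tuple (R : comNzRingType) N m (s : m.-tuple 'I_N) :
  'X_[mnm_of_seq s] = \prod_(p < m) 'X_(tnth s p) :> {mpoly R[N]}.
Proof.
rewrite /mnm_of_seq.
rewrite (big_morph (fun mm => 'X_[mm] : {mpoly R[N]}) (@mpolyXD _ _) (mpolyX0 _ _)).
by rewrite big_tuple.
Qed.

Lemma prod_sum_tuple (R : comNzRingType) (T : finType) m (F : 'I_m -> T -> R) :
  \prod_(p < m) \sum_(k : T) F p k
  = \sum_(s : m.-tuple T) \prod_(p < m) F p (tnth s p).
Proof.
rewrite bigA_distr_bigA (reindex (fun s : m.-tuple T => [ffun p => tnth s p])).
  by apply: eq_bigr => s _; apply: eq_bigr => p _; rewrite ffunE.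
exists (fun f : {ffun 'I_m -> T} => [tuple f p | p < m]) => [s _ | f _].
  by apply: eq_from_tnth => p; rewrite tnth_mktuple ffunE.
by apply/ffunP => p; rewrite !ffunE tnth_mktuple.
Qed.

Lemma sum_pair_tuple (R : nmodType) (T : finType) (F : 2.-tuple T -> R) :
  \sum_(x : T) \sum_(y : T) F [tuple x; y] = \sum_(s : 2.-tuple T) F s.
Proof.
rewrite pair_bigA (reindex (fun xy : T * T => [tuple xy.1; xy.2])) //.
exists (fun s : 2.-tuple T => (tnth s 0, tnth s 1)) => [[x y] _ | s _] //.
by case: s => -[|x [|y []]] //= s_size; apply: val_inj.
Qed.

Lemma perm_eq_pair (T : eqType) (x y u v : T) :
  perm_eq [:: x; y] [:: u; v] = (x == u) && (y == v) || (x == v) && (y == u).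
Proof.
have perm_eq1 (a b : T) : perm_eq [:: a] [:: b] = (a == b).
  by apply/idP/eqP => [/(@perm_small_eq _ _ [:: b] isT)[]|->].
have swap_uv : perm_eq [:: u; v] [:: v; u] by rewrite (perm_catC [:: u]).
apply/idP/idP => [xy_uv|/orP[]/andP[/eqP-> /eqP->] //]; last by rewrite perm_sym.
have := perm_mem xy_uv x; rewrite !inE eqxx => /esym/orP[]/eqP x_eq; subst x.
  by move: xy_uv; rewrite perm_cons perm_eq1 eqxx => ->.
by move: xy_uv; rewrite (permPr swap_uv) perm_cons perm_eq1 eqxx orbC => ->.
Qed.

Lemma Perm_mset2 d (u v : 'I_d) :
  Perm (mset2 u v) = [set [tuple u; v]; [tuple v; u]].
Proof.
apply/setP => -[[|x [|y []]] //= s_size].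
rewrite !inE /mset2 /msort /= (permPr (permEl (perm_sort _ _))) perm_eq_pair.
by rewrite -!val_eqE /= !eqseq_cons !andbT.
Qed.

Lemma sum_Perm_mset2 (R : numFieldType) d (u v : 'I_d) (F : 2.-tuple 'I_d -> R) :
  (\sum_(s in Perm (mset2 u v)) F s) / #|Perm (mset2 u v)|%:R
  = (F [tuple u; v] + F [tuple v; u]) / 2.
Proof.
have eq_swap : ([tuple u; v] == [tuple v; u]) = (u == v).
  by rewrite -val_eqE /= !eqseq_cons andbT [v == u]eq_sym andbb.
rewrite Perm_mset2 cards2 eq_swap.
have [<- | neq_uv] := eqVneq u v.
  by rewrite setUid big_set1 /=; field.
by rewrite big_setU1 ?inE ?eq_swap ?neq_uv //= big_set1.
Qed.

Lemma eq_Xvar d t (k k' : 'I_d) (m m' : 'I_t) :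
  (Xvar k m == Xvar k' m') = (k == k') && (m == m').
Proof.
by apply/eqP/andP => [/cast_ord_inj/enum_rank_inj[-> ->] | [/eqP-> /eqP->]].
Qed.

Lemma perm_eq_Xvar_cat d t (m n j : 'I_t) (s s' : seq 'I_d) (k b : 'I_d) :
  n != j -> s != [::] ->
  perm_eq (map (fun i => Xvar i m) s ++ [:: Xvar k j])
          (map (fun i => Xvar i n) s' ++ [:: Xvar b j])
  = [&& m == n, k == b & perm_eq s s'].
Proof.
move=> neq_nj; case: s => [|x s] // _.
apply/idP/and3P => [perm_ss'|[/eqP-> /eqP-> perm_ss']]; last first.
  by rewrite perm_cat2r perm_map.
have: Xvar k j \in map (fun i => Xvar i n) s' ++ [:: Xvar b j].
  by rewrite -(perm_mem perm_ss') mem_cat mem_seq1 eqxx orbT.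
rewrite mem_cat mem_seq1 eq_Xvar eqxx andbT => /orP[/mapP[i _ /eqP] | /eqP eq_kb].
  by rewrite eq_Xvar [j == n]eq_sym (negbTE neq_nj) andbF.
subst k; move: perm_ss'; rewrite perm_cat2r => perm_map_ss'.
have: Xvar x m \in map (fun i => Xvar i n) s'.
  by rewrite -(perm_mem perm_map_ss') mem_head.
case/mapP => i _ /eqP; rewrite eq_Xvar => /andP[_ /eqP eq_mn]; subst m.
rewrite !eqxx (perm_map_inj _ perm_map_ss') // => i1 i2 /eqP.
by rewrite eq_Xvar eqxx andbT => /eqP.
Qed.

Lemma monoAbE d t (A : mset 2 d) (b : 'I_d) (n j : 'I_t) :
  monoAb A b n j = mnm_of_seq (map (fun i => Xvar i n) A ++ [:: Xvar b j]).
Proof.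
rewrite /monoAb /mnm_of_seq big_cat big_seq1 big_map; congr (mnm_add _ _).
by elim: (tval (mtup A)) => [|x s /= ->]; rewrite ?big_nil ?big_cons.
Qed.

Lemma phiWE (R : realFieldType) d t a (Q K : 'M[R]_(a, d)) (V : 'rV[R]_d)
    (j : 'I_t) :
  phiW t Q K V 0 j = \sum_(m < t) \sum_(b < d) \sum_(s : 2.-tuple 'I_d)
    (V 0 (tnth s 0) * Amat Q K (tnth s 1) b)%:MP
      * 'X_[mnm_of_seq (map (fun i => Xvar i m) s ++ [:: Xvar b j])].
Proof.
rewrite /phiW mxE; apply: eq_bigr => m _.
rewrite !mxE mulr_sumr; apply: eq_bigr => b _.
rewrite -[RHS]sum_pair_tuple !mxE mulrA !mulr_suml; apply: eq_bigr => x _.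
rewrite mulr_sumr mulr_suml; apply: eq_bigr => y _.
rewrite !mxE /mnm_of_seq /= !big_cons big_nil !mpolyXD mpolyX0 mpolyCM.
ring.
Qed.

Lemma det_mulmx_thin (R : comNzRingType) n (U : 'M[R]_(n.+1, n))
    (W : 'M[R]_(n, n.+1)) :
  \det (U *m W) = 0.
Proof.
have -> : U *m W = row_mx (0 : 'M_(n.+1, 1)) U *m col_mx (0 : 'M_(1, n.+1)) W.
  by rewrite mul_row_col mul0mx add0r.
rewrite det_mulmx [X in _ * X](expand_det_row _ 0) [X in _ * X]big1 ?mulr0 // => q _.
by rewrite mxE; case: splitP => [i _ | //]; rewrite mxE mul0r.
Qed.

Definition pencil (R : comNzRingType) m d (N : 'I_d -> 'M[R]_m)
    : 'M[{mpoly R[d]}]_m :=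
  \matrix_(p, q) \sum_k 'X_k * (N k p q)%:MP.

Lemma det_pencil (R : comNzRingType) m d (N : 'I_d -> 'M[R]_m) :
  \det (pencil N) = \sum_(s : m.-tuple 'I_d)
    'X_[mnm_of_seq s] * (\det (\matrix_(p, q) N (tnth s p) p q))%:MP.
Proof.
have prod_pencil (f : 'I_m -> 'I_m) : \prod_p pencil N p (f p)
    = \sum_(s : m.-tuple 'I_d) \prod_p ('X_(tnth s p) * (N (tnth s p) p (f p))%:MP).
  rewrite -(prod_sum_tuple (fun p k => 'X_k * (N k p (f p))%:MP)).
  by apply: eq_bigr => p _; rewrite mxE.
rewrite /determinant; under eq_bigr do rewrite prod_pencil big_distrr.
rewrite exchange_big /=; apply: eq_bigr => s _.
rewrite raddf_sum big_distrr /=; apply: eq_bigr => sigma _.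
rewrite big_split /= -mpolyX_of_tuple rmorphM rmorph_sign rmorph_prod mulrCA.
by congr (_ * (_ * _)); apply: eq_bigr => p _; rewrite mxE.
Qed.

Lemma mcoeff_det_pencil (R : comNzRingType) m d (N : 'I_d -> 'M[R]_m)
    (S : mset m d) :
  (\det (pencil N))@_(mnm_of_seq S)
  = \sum_(s in Perm S) \det (\matrix_(p, q) N (tnth s p) p q).
Proof.
rewrite det_pencil raddf_sum [RHS]big_mkcond; apply: eq_bigr => s _ /=.
rewrite mulrC mcoeffCM mcoeffX eq_mnm_of_seq inE.
by case: (perm_eq s S); rewrite ?mulr1 ?mulr0.
Qed.

Lemma det_pencil_sym_rank2 (R : comNzRingType) d (f : 'I_d -> R)
    (g : 'I_d -> 'I_d -> R) (r c : 3.-tuple 'I_d) :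
  \det (pencil (fun k => \matrix_(p, q)
    (f (tnth r p) * g (tnth c q) k + f (tnth c q) * g (tnth r p) k))) = 0.
Proof.
pose fC x : {mpoly R[d]} := (f x)%:MP.
pose L x : {mpoly R[d]} := \sum_k 'X_k * (g x k)%:MP.
rewrite (_ : pencil _ = row_mx (\col_p fC (tnth r p)) (\col_p L (tnth r p))
                      *m col_mx (\row_q L (tnth c q)) (\row_q fC (tnth c q))).
  exact: det_mulmx_thin.
apply/matrixP => p q; rewrite mul_row_col !mxE !big_ord1 !mxE /L.
rewrite mulr_sumr mulr_suml -big_split; apply: eq_bigr => k _ /=.
by rewrite !mxE mpolyCD !mpolyCM /fC; ring.
Qed.

Lemma Delta_pencil (R : realFieldType) d t (z : Idx d t -> R) (n j : 'I_t)
    (hnj : n != j) (r c : 3.-tuple 'I_d) (S : mset 3 d) :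
  Delta z hnj r c S = (\det (pencil (fun k =>
    \matrix_(p, q) Ttil z hnj (tnth r p) (tnth c q) k)))@_(mnm_of_seq S).
Proof.
rewrite mcoeff_det_pencil; apply: eq_bigr => s _.
by congr (\det _); apply/matrixP => p q; rewrite !mxE.
Qed.

Section ImageOfMu.
Variables (R : realFieldType) (d t a : nat).
Variables (Q K : 'M[R]_(a, d)) (V : 'rV[R]_d) (n j : 'I_t).
Hypothesis neq_nj : n != j.

Lemma coef_c_Perm (A : mset 2 d) (b : 'I_d) :
  coef_c Q K V n j A b
  = \sum_(s in Perm A) V 0 (tnth s 0) * Amat Q K (tnth s 1) b.
Proof.
have coef_term m b' (s : 2.-tuple 'I_d) :
    mcoeff (monoAb A b n j) ((V 0 (tnth s 0) * Amat Q K (tnth s 1) b')%:MP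
      * 'X_[mnm_of_seq (map (fun i => Xvar i m) s ++ [:: Xvar b' j])])
    = V 0 (tnth s 0) * Amat Q K (tnth s 1) b'
        *+ [&& m == n, b' == b & s \in Perm A].
  rewrite mcoeffCM mcoeffX monoAbE eq_mnm_of_seq perm_eq_Xvar_cat ?inE ?mulr_natr //.
  by rewrite -size_eq0 size_tuple.
rewrite /coef_c phiWE raddf_sum (bigD1 n) //= [X in _ + X]big1 ?addr0
  => [|m neq_mn]; last first.
  rewrite raddf_sum big1 // => b' _; rewrite raddf_sum big1 // => s _.
  by rewrite /= coef_term (negbTE neq_mn).
rewrite raddf_sum (bigD1 b) //= [X in _ + X]big1 ?addr0
  => [|b' neq_b'b]; last first.
  by rewrite raddf_sum big1 // => s _; rewrite /= coef_term (negbTE neq_b'b) andbF.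
rewrite raddf_sum [RHS]big_mkcond /=; apply: eq_bigr => s _.
by rewrite /= coef_term !eqxx; case: (s \in Perm A).
Qed.

Lemma Ttil_mu (u v b : 'I_d) :
  Ttil (mu Q K V) neq_nj u v b
  = (V 0 u * Amat Q K v b + V 0 v * Amat Q K u b) / 2.
Proof.
by rewrite /Ttil /mu /= /coef_y coef_c_Perm sum_Perm_mset2.
Qed.

Lemma Mslice_mu (k : 'I_d) :
  Mslice (mu Q K V) neq_nj k
  = 2^-1 *: (V^T *m (col k (Amat Q K))^T + col k (Amat Q K) *m V).
Proof.
(* Naming A keeps mxE from expanding the product K^T *m Q. *)
apply/matrixP => u v; rewrite [LHS]mxE Ttil_mu; set A := Amat Q K.
by rewrite !mxE !big_ord1 !mxE; field.
Qed.

Lemma rank_comb_Mslice_mu (lambda : 'I_d -> R) :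
  (\rank (\sum_k lambda k *: Mslice (mu Q K V) neq_nj k)%R <= 2)%N.
Proof.
pose w := \sum_k lambda k *: col k (Amat Q K).
have -> : \sum_k lambda k *: Mslice (mu Q K V) neq_nj k
          = 2^-1 *: (V^T *m w^T + w *m V).
  under eq_bigr do rewrite Mslice_mu scalerA mulrC -scalerA.
  rewrite -scaler_sumr; congr (_ *: _).
  rewrite /w raddf_sum mulmx_sumr mulmx_suml -big_split; apply: eq_bigr => k _.
  by rewrite /= linearZ /= -scalemxAr -scalemxAl scalerDr.
apply: leq_trans (mxrank_scale _ _) _; apply: leq_trans (mxrank_add _ _) _.
by rewrite -[2%N]/(1 + 1)%N leq_add // (leq_trans (mxrankM_maxl _ _)) ?rank_leq_col.
Qed.

Lemma det_pencil_mu (r c : 3.-tuple 'I_d) :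
  \det (pencil (fun k =>
    \matrix_(p, q) Ttil (mu Q K V) neq_nj (tnth r p) (tnth c q) k)) = 0.
Proof.
rewrite -[RHS](det_pencil_sym_rank2 (V 0) (fun v k => Amat Q K v k / 2) r c).
congr (\det _); apply/matrixP => p q; rewrite [LHS]mxE [RHS]mxE.
apply: eq_bigr => k _; rewrite [in LHS]mxE [in RHS]mxE Ttil_mu.
by congr (_ * _%:MP); rewrite mulrDl !mulrA.
Qed.

Lemma Delta_mu (r c : 3.-tuple 'I_d) (S : mset 3 d) :
  Delta (mu Q K V) neq_nj r c S = 0.
Proof. by rewrite Delta_pencil det_pencil_mu mcoeff0. Qed.

End ImageOfMu.

Lemma Delta_is_polynomial (R : realFieldType) d t (n j : 'I_t) (hnj : n != j)
    (r c : 3.-tuple 'I_d) (S : mset 3 d) :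
  exists P, forall z : Idx d t -> R, ambient_eval P z = Delta z hnj r c S.
Proof.
pose x (u v b : 'I_d) : {mpoly R[#|{: Idx d t}|]} :=
  'X_(enum_rank (mkIdx hnj (mset2 u v) b)).
exists (\sum_(s in Perm S) \det (\matrix_(p, q) x (tnth r p) (tnth c q) (tnth s p))).
move=> z; rewrite /ambient_eval raddf_sum; apply: eq_bigr => s _.
rewrite /= -det_map_mx; congr (\det _); apply/matrixP => p q.
by rewrite !mxE /x /= mevalXU enum_rankK.
Qed.

Theorem mainTheorem9 (R : realFieldType) (d t a : nat) (ht : (2 <= t)%N)
    (n j : 'I_t) (hnj : n != j) :
  (forall (Q K : 'M[R]_(a, d)) (V : 'rV[R]_d) (k3 : 'I_d) (n' : 'I_t) (hn'j : n' != j),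
     Mslice (mu Q K V) hnj k3 = Mslice (mu Q K V) hn'j k3) /\
  (forall (Q K : 'M[R]_(a, d)) (V : 'rV[R]_d) (lambda : 'I_d -> R),
     (\rank ((\sum_(k < d) lambda k *: Mslice (mu Q K V) hnj k)%R) <= 2)%N) /\
  (forall (r c : 3.-tuple 'I_d) (S : mset 3 d),
     uniq r -> uniq c ->
     forall z : Idx d t -> R, attention_variety a z -> Delta z hnj r c S = 0).
Proof.
(* [2 <= t] follows from [n != j], and Delta vanishes for arbitrary index triples
   [r], [c]. *)
split=> [Q K V k n' hn'j | ]; first by rewrite !Mslice_mu.
split=> [Q K V lambda | r c S _ _ z z_in_variety]; first exact: rank_comb_Mslice_mu.
have [P P_Delta] := Delta_is_polynomial R hnj r c S.
rewrite -P_Delta; apply: z_in_variety => Q K V.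
by rewrite P_Delta Delta_mu.
Qed.
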